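(* Let $(a(l))_{l\ge0}$ be generated by SGG with activation probability $p\in[0,1]$ on a connected graph from an initial state $a(0)\ne\bar a$, and let $E_l=\mathbb E\|a(l)-\bar a\|^2$. Define $\eta_l=\mathbb E\big[R_{SGG}(a(l-1);p)-R_{RG}(a(l-1))\big]$ and $\beta_l=\eta_l/E_{l-1}$ if $E_{l-1}>0$, $\beta_l=0$ otherwise. Then for all $l\ge1$: $\beta_l\ge0$, $$E_l\le\big(\lambda_2(\overline W)-\beta_l\big)E_{l-1},\qquad E_l\le \|a(0)-\bar a\|^2\prod_{i=1}^l\big(\lambda_2(\overline W)-\beta_i\big)\le\|a(0)-\bar a\|^2\Big(\lambda_2(\overline W)-\min_{1\le i\le l}\beta_i\Big)^l,$$ and for every $\epsilon\in(0,1)$, $$\Pr\Big(\tfrac{\|a(l)-\bar a\|}{\|a(0)-\bar a\|}\ge\epsilon\Big)\le\epsilon^{-2}\Big(\lambda_2(\overline W)-\min_{1\le i\le l}\beta_i\Big)^l .$$ Consequently, if $\rho_l:=\lambda_2(\overline W)-\min_{1\le i\le l}\beta_i>0$ and $l\ge \dfrac{3\log\epsilon^{-1}}{\log \rho_l^{-1}}$, then $\Pr\big(\|a(l)-\bar a\|/\|a(0)-\bar a\|\ge\epsilon\big)\le\epsilon$; i.e. the $\epsilon$-averaging time of SGG is at most $3\log\epsilon^{-1}/\log\big(\lambda_2(\overline W)-\min_i\beta_i\big)^{-1}$.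
   Context: Connected undirected graph on $\mathcal V=\{1,\dots,N\}$, $N\ge2$, neighbour sets $\mathcal N_s$ (excluding $s$). $\bar a$ is the vector with all entries $\frac1N\sum_s a_s(0)$. SGG step: node $s$ uniform on $\mathcal V$; each $t\in\mathcal N_s$ independently active with probability $p$; partner $t^*$ maximises $(a_s(l-1)-a_t(l-1))^2$ over active neighbours, or is uniform on $\mathcal N_s$ if none is active; then $a_s(l)=a_{t^*}(l)=\frac12(a_s(l-1)+a_{t^*}(l-1))$, others unchanged. $R_{RG}(x)=\frac1{2N}\sum_{s}\frac1{|\mathcal N_s|}\sum_{t\in\mathcal N_s}(x_s-x_t)^2$; $R_{SGG}(x;p)=\frac1{2N}\sum_{s}\Big[\sum_{\emptyset\ne A\subseteq\mathcal N_s}p^{|A|}(1-p)^{|\mathcal N_s|-|A|}\max_{t\in A}(x_s-x_t)^2+(1-p)^{|\mathcal N_s|}\frac1{|\mathcal N_s|}\sum_{t\in\mathcal N_s}(x_s-x_t)^2\Big]$. Randomised gossip matrix: for $(s,t)$ with $t\in\mathcal N_s$, $W_{st}=I-\frac12(e_s-e_t)(e_s-e_t)^T$ ($e_i$ standard basis vectors), and $\overline W=\frac1N\sum_{s=1}^N\frac1{|\mathcal N_s|}\sum_{t\in\mathcal N_s}W_{st}$ is the expected one-step update matrix of randomised gossip (node $s$ uniform, partner uniform in $\mathcal N_s$). $\lambda_2(\overline W)$ denotes the second largest eigenvalue of the symmetric matrix $\overline W$. *)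

From Stdlib Require Import Reals Lra Lia List Arith Relations.
Import ListNotations.
Open Scope R_scope.

(* Vertices are 0 .. N-1; vectors are functions nat -> R (only indices < N matter). *)

Definition sumL {A : Type} (l : list A) (f : A -> R) : R :=
  fold_right (fun a acc => f a + acc) 0 l.

Definition prodL {A : Type} (l : list A) (f : A -> R) : R :=
  fold_right (fun a acc => f a * acc) 1 l.

(* maximum of f over a nonempty list (0 on the empty list, never used) *)
Fixpoint maxL {A : Type} (f : A -> R) (l : list A) : R :=
  match l with
  | [] => 0
  | [a] => f a
  | a :: l' => Rmax (f a) (maxL f l')
  end.

Fixpoint subsets (l : list nat) : list (list nat) :=
  match l with
  | [] => [[]]
  | x :: l' => let s := subsets l' in map (cons x) s ++ s
  end.

Definition nbrs (adj : nat -> nat -> bool) (N s : nat) : list nat :=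
  filter (adj s) (seq 0 N).

Definition simple_graph (adj : nat -> nat -> bool) : Prop :=
  (forall i j, adj i j = adj j i) /\ (forall i, adj i i = false).

Definition connected_graph (adj : nat -> nat -> bool) (N : nat) : Prop :=
  forall i j, (i < N)%nat -> (j < N)%nat ->
    clos_refl_trans nat (fun x y => (x < N)%nat /\ (y < N)%nat /\ adj x y = true) i j.

Definition avg (N : nat) (a0 : nat -> R) : R := sumL (seq 0 N) a0 / INR N.

Definition sqdist (N : nat) (a0 x : nat -> R) : R :=
  sumL (seq 0 N) (fun i => (x i - avg N a0) ^ 2).

Definition upd (x : nat -> R) (s t : nat) : nat -> R :=
  fun i => if (Nat.eqb i s || Nat.eqb i t)%bool then (x s + x t) / 2 else x i.

(* A valid tie-breaking selection rule: for a nonempty active set A, it returns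
   an element of A maximising (x_s - x_t)^2. *)
Definition valid_selector (sel : (nat -> R) -> nat -> list nat -> nat) : Prop :=
  forall x s A, A <> [] ->
    In (sel x s A) A /\ forall t, In t A -> (x s - x t) ^ 2 <= (x s - x (sel x s A)) ^ 2.

(* One SGG step from state x: list of (probability, next state) outcomes. *)
Definition sgg_step (N : nat) (adj : nat -> nat -> bool) (p : R)
    (sel : (nat -> R) -> nat -> list nat -> nat) (x : nat -> R)
    : list (R * (nat -> R)) :=
  flat_map (fun s =>
    let Ns := nbrs adj N s in
    flat_map (fun A =>
      match A with
      | [] => map (fun t => (/ INR N * (1 - p) ^ length Ns * / INR (length Ns), upd x s t)) Ns
      | _ :: _ => [(/ INR N * (p ^ length A * (1 - p) ^ (length Ns - length A)),
                    upd x s (sel x s A))]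
      end) (subsets Ns)) (seq 0 N).

Fixpoint sgg_dist (N : nat) (adj : nat -> nat -> bool) (p : R)
    (sel : (nat -> R) -> nat -> list nat -> nat) (a0 : nat -> R) (l : nat)
    : list (R * (nat -> R)) :=
  match l with
  | O => [(1, a0)]
  | S l' => flat_map (fun wx => map (fun wy => (fst wx * fst wy, snd wy))
                                  (sgg_step N adj p sel (snd wx)))
                     (sgg_dist N adj p sel a0 l')
  end.

Definition expect N adj p sel a0 (l : nat) (f : (nat -> R) -> R) : R :=
  sumL (sgg_dist N adj p sel a0 l) (fun wx => fst wx * f (snd wx)).

Definition Err N adj p sel a0 (l : nat) : R :=
  expect N adj p sel a0 l (sqdist N a0).

Definition R_RG (N : nat) (adj : nat -> nat -> bool) (x : nat -> R) : R :=
  / (2 * INR N) * sumL (seq 0 N) (fun s =>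
     / INR (length (nbrs adj N s)) * sumL (nbrs adj N s) (fun t => (x s - x t) ^ 2)).

Definition R_SGG (N : nat) (adj : nat -> nat -> bool) (p : R) (x : nat -> R) : R :=
  / (2 * INR N) * sumL (seq 0 N) (fun s =>
    let Ns := nbrs adj N s in
    sumL (subsets Ns) (fun A =>
       match A with
       | [] => 0
       | _ :: _ => p ^ length A * (1 - p) ^ (length Ns - length A)
                   * maxL (fun t => (x s - x t) ^ 2) A
       end)
    + (1 - p) ^ length Ns * (/ INR (length Ns) * sumL Ns (fun t => (x s - x t) ^ 2))).

Definition eta N adj p sel a0 (l : nat) : R :=
  expect N adj p sel a0 (l - 1) (fun x => R_SGG N adj p x - R_RG N adj x).

Definition beta N adj p sel a0 (l : nat) : R :=
  if Rlt_dec 0 (Err N adj p sel a0 (l - 1))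
  then eta N adj p sel a0 l / Err N adj p sel a0 (l - 1) else 0.

Definition min_beta N adj p sel a0 (l : nat) : R :=
  fold_right (fun i acc => Rmin (beta N adj p sel a0 i) acc)
             (beta N adj p sel a0 l) (seq 1 l).

Definition prob_ratio_ge N adj p sel a0 (l : nat) (eps : R) : R :=
  sumL (sgg_dist N adj p sel a0 l) (fun wx =>
    if Rle_dec eps (sqrt (sqdist N a0 (snd wx)) / sqrt (sqdist N a0 a0))
    then fst wx else 0).

Definition kron (i j : nat) : R := if Nat.eqb i j then 1 else 0.

Definition W_st (s t : nat) (i j : nat) : R :=
  kron i j - / 2 * ((kron i s - kron i t) * (kron j s - kron j t)).

Definition Wbar (N : nat) (adj : nat -> nat -> bool) (i j : nat) : R :=
  / INR N * sumL (seq 0 N) (fun s =>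
     / INR (length (nbrs adj N s)) * sumL (nbrs adj N s) (fun t => W_st s t i j)).

(* lam is the second largest eigenvalue (counted with multiplicity) of the
   symmetric N x N matrix M: M has an orthonormal eigenbasis v_0..v_{N-1}
   with eigenvalues mu_0 >= mu_1 >= ... >= mu_{N-1}, and lam = mu_1. *)
Definition is_lambda2 (N : nat) (M : nat -> nat -> R) (lam : R) : Prop :=
  exists (v : nat -> nat -> R) (mu : nat -> R),
    (forall k k', (k < N)%nat -> (k' < N)%nat ->
        sumL (seq 0 N) (fun i => v k i * v k' i) = kron k k') /\
    (forall k i, (k < N)%nat -> (i < N)%nat ->
        sumL (seq 0 N) (fun j => M i j * v k j) = mu k * v k i) /\
    (forall k, (S k < N)%nat -> mu (S k) <= mu k) /\
    lam = mu 1%nat.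

From Stdlib Require Import Reals Lra Lia List Relations.
From mathcomp Require all_boot all_algebra Rstruct.
Import ListNotations.
Open Scope R_scope.

(* Write x for a(l-1), e for ||x - abar||^2 and lambda for lambda_2(Wbar).
   1. One SGG step from x: node s wakes up with active set A; averaging s with
      partner t lowers e by (x_s - x_t)^2 / 2 and keeps the sum.  Summing over
      s and A gives E[ ||a(l) - abar||^2 | x ] = e - R_SGG(x)   (sgg_step_sqdist).
   2. Greedy beats random (R_RG_le_R_SGG): for each node, the expected maximum
      of the gaps over the active neighbours is at least 1 - (1-p)^n times
      their mean; proved by induction on the neighbour list (exp_max_mean).
   3. Spectral gap: Wbar has quadratic form ||y||^2 - R_RG(y) (quad_eq) and
      fixes constants; expanding in an orthonormal eigenbasis (complete by a
      matrix-algebra argument) gives ||y||^2 - R_RG(y) <= lambda ||y||^2 on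
      zero-sum y (quad_le_lambda2), with 0 <= lambda < 1 on a connected graph.
   4. Taking expectations, E_l + eta_l <= lambda E_(l-1) (Err_eta_le), whence the
      properties of beta_l, the product bound and the min_beta bound (Rates).
   5. Chebyshev's inequality and a logarithm computation give the tail bound
      and the averaging-time statement. *)

(* Rinv is total in Stdlib (/ 0 = 0), so inverses of nonnegatives are nonnegative. *)
Lemma Rinv_nonneg x : 0 <= x -> 0 <= / x.
Proof.
  intros Hx. destruct (Req_dec x 0) as [->|Hx0]; [rewrite Rinv_0; lra|].
  apply Rlt_le, Rinv_0_lt_compat. lra.
Qed.

Section FiniteSums.
Context {A : Type}.
Implicit Types (l : list A) (f g : A -> R).

Lemma sumL_app l1 l2 f : sumL (l1 ++ l2) f = sumL l1 f + sumL l2 f.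
Proof. induction l1 as [|a l1 IH]; simpl; [ring | rewrite IH; ring]. Qed.

Lemma sumL_ext l f g : (forall x, In x l -> f x = g x) -> sumL l f = sumL l g.
Proof.
  induction l as [|a l IH]; intros H; simpl; [reflexivity|].
  rewrite H, IH; [reflexivity | intros; apply H |]; simpl; auto.
Qed.

Lemma sumL_plus l f g : sumL l (fun x => f x + g x) = sumL l f + sumL l g.
Proof. induction l as [|a l IH]; simpl; [ring | rewrite IH; ring]. Qed.

Lemma sumL_minus l f g : sumL l (fun x => f x - g x) = sumL l f - sumL l g.
Proof. induction l as [|a l IH]; simpl; [ring | rewrite IH; ring]. Qed.

Lemma sumL_scal l c f : sumL l (fun x => c * f x) = c * sumL l f.
Proof. induction l as [|a l IH]; simpl; [ring | rewrite IH; ring]. Qed.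

Lemma sumL_const l c : sumL l (fun _ => c) = INR (length l) * c.
Proof.
  induction l as [|a l IH]; simpl length; [simpl; ring|].
  rewrite S_INR. simpl. rewrite IH. ring.
Qed.

Lemma sumL_le l f g : (forall x, In x l -> f x <= g x) -> sumL l f <= sumL l g.
Proof.
  induction l as [|a l IH]; intros H; simpl; [lra|].
  apply Rplus_le_compat; [apply H; simpl; auto | apply IH; intros; apply H; simpl; auto].
Qed.

Lemma sumL_nonneg l f : (forall x, In x l -> 0 <= f x) -> 0 <= sumL l f.
Proof.
  intros H. rewrite <- (Rmult_0_r (INR (length l))), <- sumL_const.
  apply sumL_le; exact H.
Qed.

Lemma sumL_ge_term l f x : (forall y, In y l -> 0 <= f y) -> In x l -> f x <= sumL l f.
Proof.
  induction l as [|a l IH]; intros H Hx; [destruct Hx|]; simpl.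
  assert (0 <= f a) by (apply H; simpl; auto).
  assert (0 <= sumL l f) by (apply sumL_nonneg; intros; apply H; simpl; auto).
  destruct Hx as [<-|Hx]; [lra|].
  assert (f x <= sumL l f) by (apply IH; auto; intros; apply H; simpl; auto). lra.
Qed.

End FiniteSums.

Lemma sumL_swap {A B : Type} (l : list A) (m : list B) (h : A -> B -> R) :
  sumL l (fun a => sumL m (fun b => h a b)) = sumL m (fun b => sumL l (fun a => h a b)).
Proof.
  induction l as [|a l IH]; simpl.
  - rewrite (sumL_ext m (fun _ => 0) (fun _ => 0 * 0)), sumL_const by (intros; ring). ring.
  - rewrite IH, <- sumL_plus. reflexivity.
Qed.

Lemma sum_prod {A B : Type} (l : list A) (m : list B) (f : A -> R) (g : B -> R) :
  sumL l f * sumL m g = sumL l (fun a => sumL m (fun b => f a * g b)).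
Proof.
  rewrite (Rmult_comm (sumL l f)), <- sumL_scal. apply sumL_ext; intros a _.
  rewrite Rmult_comm, <- sumL_scal. apply sumL_ext; intros; ring.
Qed.

Lemma sumL_scalr {A} (l : list A) c (f : A -> R) : sumL l (fun x => f x * c) = sumL l f * c.
Proof. rewrite Rmult_comm, <- sumL_scal. apply sumL_ext; intros; ring. Qed.

Lemma sumL_map {A B} (h : A -> B) l (f : B -> R) : sumL (map h l) f = sumL l (fun x => f (h x)).
Proof. induction l as [|a l IH]; simpl; [reflexivity | rewrite IH; reflexivity]. Qed.

Lemma sumL_flat_map {A B} (h : A -> list B) l (f : B -> R) :
  sumL (flat_map h l) f = sumL l (fun x => sumL (h x) f).
Proof. induction l as [|a l IH]; simpl; [reflexivity | rewrite sumL_app, IH; reflexivity]. Qed.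

Lemma sumL_kron N s (g : nat -> R) : (s < N)%nat ->
  sumL (seq 0 N) (fun i => kron i s * g i) = g s.
Proof.
  intros Hs. rewrite (sumL_ext _ _ (fun i => if Nat.eqb i s then g s else 0)).
  - assert (Hin : In s (seq 0 N)) by (apply in_seq; lia).
    generalize (seq_NoDup N 0). induction (seq 0 N) as [|a l IH]; [destruct Hin|].
    intros Hnd. inversion Hnd as [|? ? Hna Hnd']; subst. simpl.
    destruct Hin as [->|Hin].
    + rewrite Nat.eqb_refl, (sumL_ext l _ (fun _ => 0)), sumL_const; [ring|].
      intros i Hi. destruct (Nat.eqb_spec i s); [subst; contradiction | reflexivity].
    + destruct (Nat.eqb_spec a s); [subst; contradiction|]. rewrite IH; auto. ring.
  - intros i _. unfold kron. destruct (Nat.eqb_spec i s); [subst|]; ring.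
Qed.

Lemma kron_sym i j : kron i j = kron j i.
Proof. unfold kron. rewrite Nat.eqb_sym. reflexivity. Qed.

(* Orthonormal rows of a square matrix are also orthonormal columns:
   V V^T = I implies V^T V = I.  This is where the finite dimension is used,
   so we borrow it from the matrix library. *)
Module OrthonormalCompleteness.
Local Set Warnings "-notation-overridden,-ambiguous-paths".
Import all_boot all_algebra Rstruct.
Import GRing.Theory.
Local Open Scope ring_scope.

Lemma sumL_ord n (f : nat -> R) : sumL (List.seq 0 n) f = \sum_(i < n) f i.
Proof.
have sumL_iota a m : sumL (List.seq a m) f = \sum_(i <- iota a m) f i.
  by elim: m a => [|m IH] a /=; rewrite ?big_nil ?big_cons ?IH.
by rewrite sumL_iota -(big_mkord xpredT f) /index_iota subn0.
Qed.

Lemma kron_mx n (k k' : 'I_n) : kron k k' = (1%:M : 'M[R]_n) k k'.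
Proof.
rewrite !mxE /kron; case: (eqVneq k k') => [->|/eqP ne]; first by rewrite Nat.eqb_refl.
by rewrite (proj2 (Nat.eqb_neq _ _)) // => eq; apply: ne; apply: ord_inj.
Qed.

Lemma columns_orthonormal N (v : nat -> nat -> R) :
  (forall k k', (k < N)%coq_nat -> (k' < N)%coq_nat ->
     sumL (List.seq 0 N) (fun i => Rmult (v k i) (v k' i)) = kron k k') ->
  forall i j, (i < N)%coq_nat -> (j < N)%coq_nat ->
     sumL (List.seq 0 N) (fun k => Rmult (v k i) (v k j)) = kron i j.
Proof.
move=> rows i j /ltP Hi /ltP Hj.
pose V : 'M[R]_N := \matrix_(k < N, i < N) v k i.
have VVt : V *m V^T = 1%:M.
  apply/matrixP => k k'; rewrite -kron_mx -(rows k k' (ltP (ltn_ord k)) (ltP (ltn_ord k'))).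
  by rewrite sumL_ord !mxE; apply: eq_bigr => m _; rewrite !mxE.
have := congr1 (fun M : 'M[R]_N => M (Ordinal Hi) (Ordinal Hj)) (mulmx1C VVt).
rewrite /= -kron_mx /= => <-.
by rewrite sumL_ord !mxE; apply: eq_bigr => m _; rewrite !mxE.
Qed.
End OrthonormalCompleteness.

Section Averaging.
Variables (N : nat) (x : nat -> R) (s t : nat).
Hypotheses (Hs : (s < N)%nat) (Ht : (t < N)%nat) (Hst : s <> t).

Lemma upd_kron i :
  upd x s t i = x i + kron i s * ((x s + x t) / 2 - x s) + kron i t * ((x s + x t) / 2 - x t).
Proof.
  unfold upd, kron.
  destruct (Nat.eqb_spec i s), (Nat.eqb_spec i t); simpl; subst; try lia; ring.
Qed.

Lemma upd_sum : sumL (seq 0 N) (upd x s t) = sumL (seq 0 N) x.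
Proof.
  rewrite (sumL_ext _ _ _ (fun i _ => upd_kron i)), !sumL_plus, !sumL_kron by assumption.
  field.
Qed.

Lemma upd_sqdist (c : R) :
  sumL (seq 0 N) (fun i => (upd x s t i - c) ^ 2) =
  sumL (seq 0 N) (fun i => (x i - c) ^ 2) - (x s - x t) ^ 2 / 2.
Proof.
  rewrite (sumL_ext _ _ (fun i => (x i - c) ^ 2
     + kron i s * (((x s + x t) / 2 - c) ^ 2 - (x s - c) ^ 2)
     + kron i t * (((x s + x t) / 2 - c) ^ 2 - (x t - c) ^ 2))).
  - rewrite !sumL_plus, !sumL_kron by assumption. field.
  - intros i _. unfold upd, kron.
    destruct (Nat.eqb_spec i s), (Nat.eqb_spec i t); simpl; subst; try lia; ring.
Qed.
End Averaging.

Definition weight (p : R) (n : nat) (A : list nat) : R :=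
  p ^ length A * (1 - p) ^ (n - length A).

(* The expected value of the maximum of f over the active neighbours
   (the empty active set contributes 0, as maxL f [] = 0). *)
Definition exp_max (p : R) (f : nat -> R) (l : list nat) : R :=
  sumL (subsets l) (fun A => weight p (length l) A * maxL f A).

Lemma subsets_length l A : In A (subsets l) -> (length A <= length l)%nat.
Proof.
  revert A; induction l as [|x l IH]; simpl; intros A HA.
  - destruct HA as [<-|[]]. simpl. lia.
  - apply in_app_or in HA as [HA|HA].
    + apply in_map_iff in HA as [B [<- HB]]. simpl. specialize (IH _ HB). lia.
    + specialize (IH _ HA). lia.
Qed.

Lemma subsets_incl l A : In A (subsets l) -> incl A l.
Proof.
  revert A; induction l as [|x l IH]; simpl; intros A HA.
  - destruct HA as [<-|[]]. apply incl_nil_l.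
  - apply in_app_or in HA as [HA|HA].
    + apply in_map_iff in HA as [B [<- HB]]. apply incl_cons; [left; reflexivity|].
      apply incl_tl, IH, HB.
    + apply incl_tl, IH, HA.
Qed.

Lemma sum_subsets_nil l (u : R) :
  sumL (subsets l) (fun A => match A with [] => u | _ :: _ => 0 end) = u.
Proof.
  induction l as [|x l IH]; simpl; [ring|].
  rewrite sumL_app, sumL_map, IH, sumL_const. ring.
Qed.

Lemma weight_in p n A x : weight p (S n) (x :: A) = p * weight p n A.
Proof. unfold weight. simpl length. rewrite Nat.sub_succ. simpl. ring. Qed.

Lemma weight_out p n A : (length A <= n)%nat -> weight p (S n) A = (1 - p) * weight p n A.
Proof.
  intros H. unfold weight. replace (S n - length A)%nat with (S (n - length A)) by lia.
  simpl. ring.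
Qed.

Lemma weight_nonneg p n A : 0 <= p <= 1 -> 0 <= weight p n A.
Proof. intros Hp. unfold weight. apply Rmult_le_pos; apply pow_le; lra. Qed.

Lemma weight_total p l : sumL (subsets l) (weight p (length l)) = 1.
Proof.
  induction l as [|x l IH]; [simpl; unfold weight; simpl; ring|].
  simpl subsets. simpl length. rewrite sumL_app, sumL_map.
  rewrite (sumL_ext _ _ (fun A => p * weight p (length l) A)) by (intros; apply weight_in).
  rewrite (sumL_ext (subsets l) (weight p (S (length l)))
                    (fun A => (1 - p) * weight p (length l) A))
    by (intros A HA; apply weight_out, subsets_length, HA).
  rewrite !sumL_scal, IH. ring.
Qed.

Lemma exp_max_cons p f x l :
  exp_max p f (x :: l) = (1 - p) * exp_max p f l
    + p * sumL (subsets l) (fun B => weight p (length l) B * maxL f (x :: B)).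
Proof.
  unfold exp_max. simpl subsets. simpl length. rewrite sumL_app, sumL_map.
  rewrite (sumL_ext _ (fun B => weight p (S (length l)) (x :: B) * maxL f (x :: B))
            (fun B => p * (weight p (length l) B * maxL f (x :: B))))
    by (intros; rewrite weight_in; ring).
  rewrite (sumL_ext _ (fun B => weight p (S (length l)) B * maxL f B)
            (fun B => (1 - p) * (weight p (length l) B * maxL f B)))
    by (intros B HB; rewrite weight_out by (apply subsets_length, HB); ring).
  rewrite !sumL_scal. ring.
Qed.

Lemma maxL_nonneg (f : nat -> R) A : (forall t, 0 <= f t) -> 0 <= maxL f A.
Proof.
  intros Hf. induction A as [|a A IH]; simpl; [lra|].
  destruct A; [apply Hf | eapply Rle_trans; [apply Hf | apply Rmax_l]].
Qed.

Lemma maxL_le (f : nat -> R) A c : A <> [] -> (forall t, In t A -> f t <= c) -> maxL f A <= c.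
Proof.
  induction A as [|a A IH]; intros HA H; [congruence|].
  destruct A as [|b A']; [apply H; left; reflexivity|].
  apply Rmax_lub; [apply H; left; reflexivity|].
  apply IH; [discriminate | intros; apply H; right; assumption].
Qed.

Lemma maxL_attained (f : nat -> R) A y :
  In y A -> (forall t, In t A -> f t <= f y) -> maxL f A = f y.
Proof.
  induction A as [|a A IH]; intros Hy H; [destruct Hy|].
  destruct A as [|b A']; [destruct Hy as [->|[]]; reflexivity|].
  change (maxL f (a :: b :: A')) with (Rmax (f a) (maxL f (b :: A'))).
  destruct Hy as [->|Hy].
  - apply Rmax_left, maxL_le; [discriminate | intros; apply H; right; assumption].
  - rewrite IH by (auto; intros; apply H; right; assumption).
    apply Rmax_right, H. left; reflexivity.
Qed.

Lemma maxL_cons_ge (f : nat -> R) x B lam : B <> [] -> 0 <= lam <= 1 ->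
  lam * f x + (1 - lam) * maxL f B <= maxL f (x :: B).
Proof.
  intros HB Hlam. destruct B as [|b B]; [congruence|].
  change (maxL f (x :: b :: B)) with (Rmax (f x) (maxL f (b :: B))).
  pose proof (Rmax_l (f x) (maxL f (b :: B))). pose proof (Rmax_r (f x) (maxL f (b :: B))).
  nra.
Qed.

(* One step of the induction behind exp_max_mean: conditioning on whether x
   is active, for any mixing parameter lam in [0, 1]. *)
Lemma exp_max_cons_ge p f x l lam : 0 <= p <= 1 -> 0 <= lam <= 1 -> (forall t, 0 <= f t) ->
  (1 - p * lam) * exp_max p f l + p * (lam + (1 - p) ^ length l * (1 - lam)) * f x
    <= exp_max p f (x :: l).
Proof.
  intros Hp Hlam Hf. rewrite exp_max_cons.
  set (w := weight p (length l)).
  assert (Hsplit : sumL (subsets l) (fun B => w B * (lam * f x + (1 - lam) * maxL f B)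
                     + match B with [] => (1 - p) ^ length l * (1 - lam) * f x | _ :: _ => 0 end)
                   = lam * f x + (1 - lam) * exp_max p f l + (1 - p) ^ length l * (1 - lam) * f x).
  { rewrite sumL_plus, sum_subsets_nil.
    rewrite (sumL_ext _ _ (fun B => lam * f x * w B + (1 - lam) * (w B * maxL f B)))
      by (intros; ring).
    rewrite sumL_plus, !sumL_scal. unfold w. rewrite weight_total. unfold exp_max. ring. }
  assert (Hle : sumL (subsets l) (fun B => w B * (lam * f x + (1 - lam) * maxL f B)
                  + match B with [] => (1 - p) ^ length l * (1 - lam) * f x | _ :: _ => 0 end)
                <= sumL (subsets l) (fun B => w B * maxL f (x :: B))).
  { apply sumL_le. intros [|b B] _.
    - unfold w, weight. simpl. rewrite Nat.sub_0_r. right. ring.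
    - rewrite Rplus_0_r. apply Rmult_le_compat_l; [apply weight_nonneg; lra|].
      apply maxL_cons_ge; [discriminate | lra]. }
  nra.
Qed.

Lemma one_minus_pow_le q n : 0 <= q <= 1 -> 1 - q ^ n <= INR n * (1 - q).
Proof.
  intros Hq. induction n as [|n IH]; [simpl; lra|]. rewrite S_INR. simpl pow.
  assert (q ^ n <= 1) by (rewrite <- (pow1 n); apply pow_incr; lra). nra.
Qed.

Lemma one_minus_pow_ge q n : 0 <= q <= 1 -> INR n * (1 - q) * q ^ n <= 1 - q ^ n.
Proof.
  intros Hq. induction n as [|n IH]; [simpl; lra|]. rewrite S_INR. simpl pow.
  pose proof (pow_le q n (proj1 Hq)). pose proof (pos_INR n).
  assert (0 <= (INR n + 1) * (1 - q) * q ^ n * (1 - q))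
    by (repeat apply Rmult_le_pos; lra).
  nra.
Qed.

(* The arithmetic heart of exp_max_mean: a suitable mixing parameter lam
   propagates the bound from a list of length n to one of length n + 1. *)
Lemma mean_step_arith (n : nat) p E sm fx : (1 <= n)%nat -> 0 < p <= 1 ->
  0 <= E -> 0 <= sm -> (1 - (1 - p) ^ n) * sm <= INR n * E ->
  exists lam, 0 <= lam <= 1 /\
    (1 - (1 - p) ^ S n) * (fx + sm)
      <= INR (S n) * ((1 - p * lam) * E + p * (lam + (1 - p) ^ n * (1 - lam)) * fx).
Proof.
  intros Hn Hp HE HS Hind. rewrite S_INR. simpl pow.
  set (q := 1 - p) in *. set (a := q ^ n) in *.
  assert (Hq : 0 <= q <= 1) by (unfold q; lra).
  assert (Hnr : 1 <= INR n) by (apply (le_INR 1); assumption).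
  assert (Ha : 0 <= a) by (apply pow_le; lra).
  assert (Hlow : INR n * p * a <= 1 - a)
    by (pose proof (one_minus_pow_ge q n Hq) as H;
        replace (1 - q) with p in H by (unfold q; ring); fold a in H; lra).
  assert (Hup : 1 - q * a <= (INR n + 1) * p)
    by (pose proof (one_minus_pow_le q (S n) Hq) as H; rewrite S_INR in H; simpl in H;
        replace (1 - q) with p in H by (unfold q; ring); fold a in H; lra).
  assert (Ha1 : 0 < 1 - a).
  { assert (0 < INR n * p) by nra.
    destruct (Rlt_le_dec 0 (1 - a)); [assumption | nra]. }
  (* c is the weight the bound must put on f x; lam realises it. *)
  set (c := (1 - q * a) / ((INR n + 1) * p)).
  set (lam := (c - a) / (1 - a)).
  assert (Hc : (INR n + 1) * p * c = 1 - q * a) by (unfold c; field; nra).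
  assert (Hl : lam * (1 - a) = c - a) by (unfold lam; field; lra).
  assert (Hnp : 0 < (INR n + 1) * p) by nra.
  assert (Hca : 0 <= c - a).
  { apply (Rmult_le_reg_l _ _ _ Hnp). rewrite Rmult_0_r, Rmult_minus_distr_l, Hc.
    unfold q. nra. }
  assert (Hc1 : c <= 1).
  { apply (Rmult_le_reg_l _ _ _ Hnp). rewrite Hc. lra. }
  assert (Hkey : (INR n + 1) * (1 - p * lam) * (1 - a) = INR n * (1 - q * a)).
  { replace c with (a + lam * (1 - a)) in Hc by lra. unfold q in *. nra. }
  exists lam. split; [split; nra|].
  replace (lam + a * (1 - lam)) with c by nra.
  assert (HE' : (1 - q * a) * sm <= (INR n + 1) * (1 - p * lam) * E).
  { apply (Rmult_le_reg_l (1 - a)); [lra|].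
    replace ((1 - a) * ((INR n + 1) * (1 - p * lam) * E)) with (INR n * (1 - q * a) * E)
      by (rewrite <- Hkey; ring).
    assert (0 <= 1 - q * a) by nra. nra. }
  assert (Hfx : (INR n + 1) * p * c * fx = (1 - q * a) * fx) by (rewrite Hc; reflexivity).
  nra.
Qed.

Lemma exp_max_nonneg p f l : 0 <= p <= 1 -> (forall t, 0 <= f t) -> 0 <= exp_max p f l.
Proof.
  intros Hp Hf. apply sumL_nonneg; intros A _.
  apply Rmult_le_pos; [apply weight_nonneg, Hp | apply maxL_nonneg, Hf].
Qed.

(* The expected maximum of f over the active neighbours is at least
   1 - (1-p)^n (the probability that some neighbour is active) times the mean
   of f; by induction on the list, conditioning on the first neighbour. *)
Lemma exp_max_mean p f l : 0 <= p <= 1 -> (forall t, 0 <= f t) ->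
  (1 - (1 - p) ^ length l) * sumL l f <= INR (length l) * exp_max p f l.
Proof.
  intros Hp Hf.
  destruct (Req_dec p 0) as [->|Hp0].
  { rewrite Rminus_0_r, pow1, Rminus_diag, Rmult_0_l.
    apply Rmult_le_pos; [apply pos_INR | apply exp_max_nonneg; auto]. }
  induction l as [|x l IH]; [simpl; lra|].
  change (sumL (x :: l) f) with (f x + sumL l f).
  destruct l as [|y l'].
  { unfold exp_max, weight. simpl. lra. }
  destruct (mean_step_arith (length (y :: l')) p (exp_max p f (y :: l')) (sumL (y :: l') f) (f x))
    as [lam [Hlam Hbound]]; try assumption.
  - simpl. lia.
  - lra.
  - apply exp_max_nonneg; assumption.
  - apply sumL_nonneg; intros; apply Hf.
  - eapply Rle_trans; [exact Hbound|].
    apply Rmult_le_compat_l; [apply pos_INR|]. apply exp_max_cons_ge; assumption.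
Qed.

(* The per-node comparison behind R_RG <= R_SGG: the mean of f over the
   neighbours is at most the greedy gain, which uses the maximum when some
   neighbour is active and the mean otherwise. *)
Lemma mean_le_greedy p f l : 0 <= p <= 1 -> (forall t, 0 <= f t) ->
  / INR (length l) * sumL l f <=
  exp_max p f l + (1 - p) ^ length l * (/ INR (length l) * sumL l f).
Proof.
  intros Hp Hf.
  pose proof (exp_max_mean p f l Hp Hf). pose proof (exp_max_nonneg p f l Hp Hf).
  destruct l as [|a l]; [simpl; lra|].
  assert (Hn : 0 < INR (length (a :: l))) by (apply lt_0_INR; simpl; lia).
  apply (Rmult_le_reg_l _ _ _ Hn).
  replace (INR (length (a :: l)) * (/ INR (length (a :: l)) * sumL (a :: l) f)) with (sumL (a :: l) f)
    by (field; lra).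
  replace (INR (length (a :: l)) * (exp_max p f (a :: l) + (1 - p) ^ length (a :: l)
            * (/ INR (length (a :: l)) * sumL (a :: l) f)))
    with (INR (length (a :: l)) * exp_max p f (a :: l) + (1 - p) ^ length (a :: l) * sumL (a :: l) f)
    by (field; lra).
  lra.
Qed.

Lemma R_SGG_exp_max N adj p x : R_SGG N adj p x =
  / (2 * INR N) * sumL (seq 0 N) (fun s =>
    exp_max p (fun t => (x s - x t) ^ 2) (nbrs adj N s)
    + (1 - p) ^ length (nbrs adj N s)
      * (/ INR (length (nbrs adj N s)) * sumL (nbrs adj N s) (fun t => (x s - x t) ^ 2))).
Proof.
  unfold R_SGG, exp_max. f_equal. apply sumL_ext; intros s _. f_equal.
  apply sumL_ext; intros [|a A] _; unfold weight; simpl; ring.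
Qed.

Lemma R_RG_le_R_SGG N adj p x : 0 <= p <= 1 -> R_RG N adj x <= R_SGG N adj p x.
Proof.
  intros Hp. rewrite R_SGG_exp_max. unfold R_RG.
  apply Rmult_le_compat_l; [apply Rinv_nonneg, Rmult_le_pos; [lra | apply pos_INR]|].
  apply sumL_le; intros s _. apply mean_le_greedy; [assumption | intros; apply pow2_ge_0].
Qed.

Lemma nbrs_spec adj N s t : In t (nbrs adj N s) <-> (t < N)%nat /\ adj s t = true.
Proof. unfold nbrs. rewrite filter_In, in_seq. split; intros [H1 H2]; split; auto; lia. Qed.

Lemma nbrs_irrefl adj N s t : simple_graph adj -> In t (nbrs adj N s) -> t <> s.
Proof.
  intros [_ Hirr] Ht ->. apply nbrs_spec in Ht as [_ Ht].
  rewrite Hirr in Ht. discriminate.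
Qed.

Lemma nbrs_nonempty adj N s : (2 <= N)%nat -> connected_graph adj N -> (s < N)%nat ->
  0 < INR (length (nbrs adj N s)).
Proof.
  intros HN Hc Hs. apply lt_0_INR.
  set (j := if Nat.eqb s 0 then 1%nat else 0%nat).
  assert (Hj : (j < N)%nat /\ j <> s) by (unfold j; destruct (Nat.eqb_spec s 0); lia).
  destruct Hj as [Hj Hjs].
  pose proof (clos_rt_rt1n _ _ _ _ (Hc s j Hs Hj)) as Hpath.
  destruct Hpath as [|y z [_ [Hy Hadj]] _]; [congruence|].
  assert (Hin : In y (nbrs adj N s)) by (apply nbrs_spec; auto).
  destruct (nbrs adj N s); [destruct Hin | simpl; lia].
Qed.

Lemma connected_const adj N (w : nat -> R) : connected_graph adj N ->
  (forall s t, (s < N)%nat -> In t (nbrs adj N s) -> w s = w t) ->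
  forall i, (i < N)%nat -> w i = w 0%nat.
Proof.
  intros Hc Hw i Hi. pose proof (Hc 0%nat i ltac:(lia) Hi) as Hpath.
  symmetry. clear Hi. induction Hpath as [x y [Hx [Hy Ha]]| x | x y z _ IH1 _ IH2].
  - apply Hw; [assumption | apply nbrs_spec; auto].
  - reflexivity.
  - congruence.
Qed.

Section OneStep.
Variables (N : nat) (adj : nat -> nat -> bool) (p : R)
  (sel : (nat -> R) -> nat -> list nat -> nat) (a0 : nat -> R).
Hypotheses (HN : (2 <= N)%nat) (Hsimple : simple_graph adj) (Hconn : connected_graph adj N)
  (Hsel : valid_selector sel).

Lemma sqdist_upd x s t : (s < N)%nat -> In t (nbrs adj N s) ->
  sqdist N a0 (upd x s t) = sqdist N a0 x - (x s - x t) ^ 2 / 2.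
Proof.
  intros Hs Ht. pose proof (nbrs_irrefl adj N s t Hsimple Ht).
  apply nbrs_spec in Ht as [Ht _]. unfold sqdist. apply upd_sqdist; auto.
Qed.

Lemma sumL_upd x s t : (s < N)%nat -> In t (nbrs adj N s) ->
  sumL (seq 0 N) (upd x s t) = sumL (seq 0 N) x.
Proof.
  intros Hs Ht. pose proof (nbrs_irrefl adj N s t Hsimple Ht).
  apply nbrs_spec in Ht as [Ht _]. apply upd_sum; auto.
Qed.

(* Contribution of node s waking up with active set A: averaging with the
   greedy partner removes half the maximal gap; with no active neighbour
   the partner is uniform. *)
Lemma active_set_outcome x s A : (s < N)%nat -> In A (subsets (nbrs adj N s)) ->
  let Ns := nbrs adj N s in let f := fun t => (x s - x t) ^ 2 in
  sumL (match A with
        | [] => map (fun t => (/ INR N * (1 - p) ^ length Ns * / INR (length Ns), upd x s t)) Ns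
        | _ :: _ => [(/ INR N * (p ^ length A * (1 - p) ^ (length Ns - length A)),
                      upd x s (sel x s A))]
        end) (fun o => fst o * sqdist N a0 (snd o))
  = / INR N * (weight p (length Ns) A * (sqdist N a0 x - / 2 * maxL f A)
      - match A with [] => / 2 * (1 - p) ^ length Ns * (/ INR (length Ns) * sumL Ns f)
                   | _ :: _ => 0 end).
Proof.
  intros Hs HA Ns f.
  assert (Hn : 0 < INR (length Ns)) by (apply nbrs_nonempty; assumption).
  assert (HN0 : 0 < INR N) by (apply lt_0_INR; lia).
  destruct A as [|a A'].
  - rewrite sumL_map.
    rewrite (sumL_ext _ _ (fun t => / INR N * (1 - p) ^ length Ns * / INR (length Ns)
                                    * (sqdist N a0 x - / 2 * f t)))
      by (intros t Ht; simpl; rewrite sqdist_upd by assumption; unfold f, Rdiv; ring).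
    rewrite sumL_scal, sumL_minus, sumL_const, sumL_scal.
    unfold weight. simpl length; simpl maxL. rewrite Nat.sub_0_r. field. split; lra.
  - set (A := a :: A').
    destruct (Hsel x s A ltac:(discriminate)) as [Hin Hmax].
    assert (HinNs : In (sel x s A) Ns) by (apply (subsets_incl Ns A HA), Hin).
    cbn [sumL fold_right fst snd]. rewrite sqdist_upd by assumption.
    rewrite (maxL_attained f A (sel x s A)) by assumption.
    unfold weight, f, Rdiv. ring.
Qed.

Lemma sgg_step_sqdist x :
  sumL (sgg_step N adj p sel x) (fun o => fst o * sqdist N a0 (snd o))
  = sqdist N a0 x - R_SGG N adj p x.
Proof.
  assert (HN0 : 0 < INR N) by (apply lt_0_INR; lia).
  unfold sgg_step. rewrite R_SGG_exp_max, sumL_flat_map.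
  rewrite (sumL_ext _ _ (fun s => / INR N * (sqdist N a0 x
      - / 2 * (exp_max p (fun t => (x s - x t) ^ 2) (nbrs adj N s)
        + (1 - p) ^ length (nbrs adj N s) * (/ INR (length (nbrs adj N s))
           * sumL (nbrs adj N s) (fun t => (x s - x t) ^ 2)))))).
  - rewrite sumL_scal, sumL_minus, sumL_const, length_seq, sumL_scal. field. lra.
  - intros s Hs. apply in_seq in Hs.
    rewrite sumL_flat_map,
      (sumL_ext _ _ _ (fun A HA => active_set_outcome x s A ltac:(lia) HA)).
    rewrite sumL_scal, sumL_minus, sum_subsets_nil.
    unfold exp_max.
    rewrite (sumL_ext _ _ (fun A => sqdist N a0 x * weight p (length (nbrs adj N s)) A
        - / 2 * (weight p (length (nbrs adj N s)) A * maxL (fun t => (x s - x t) ^ 2) A)))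
      by (intros; ring).
    rewrite sumL_minus, !sumL_scal, weight_total. ring.
Qed.
End OneStep.

Section GossipMatrix.
Variables (N : nat) (adj : nat -> nat -> bool).
Hypotheses (HN : (2 <= N)%nat) (Hsimple : simple_graph adj) (Hconn : connected_graph adj N).

Definition sqnorm (y : nat -> R) : R := sumL (seq 0 N) (fun i => y i ^ 2).
Definition Wbar_apply (y : nat -> R) (i : nat) : R := sumL (seq 0 N) (fun j => Wbar N adj i j * y j).
Definition quad (y : nat -> R) : R := sumL (seq 0 N) (fun i => y i * Wbar_apply y i).

Lemma Wbar_sym i j : Wbar N adj i j = Wbar N adj j i.
Proof.
  unfold Wbar. f_equal. apply sumL_ext; intros s _. f_equal. apply sumL_ext; intros t _.
  unfold W_st. rewrite (kron_sym i j). ring.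
Qed.

Lemma W_st_apply s t i y : (s < N)%nat -> (t < N)%nat -> (i < N)%nat ->
  sumL (seq 0 N) (fun j => W_st s t i j * y j) = y i - / 2 * (kron i s - kron i t) * (y s - y t).
Proof.
  intros Hs Ht Hi.
  rewrite (sumL_ext _ _ (fun j => kron j i * y j
      - / 2 * (kron i s - kron i t) * (kron j s * y j - kron j t * y j))).
  - rewrite sumL_minus, sumL_scal, sumL_minus, !sumL_kron by assumption. ring.
  - intros j _. unfold W_st. rewrite (kron_sym i j). ring.
Qed.

Lemma Wbar_apply_avg y i : (i < N)%nat ->
  Wbar_apply y i = / INR N * sumL (seq 0 N) (fun s => / INR (length (nbrs adj N s)) *
    sumL (nbrs adj N s) (fun t => y i - / 2 * (kron i s - kron i t) * (y s - y t))).
Proof.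
  intros Hi. unfold Wbar_apply, Wbar.
  rewrite (sumL_ext _ _ (fun j => / INR N * sumL (seq 0 N) (fun s => / INR (length (nbrs adj N s)) *
      sumL (nbrs adj N s) (fun t => W_st s t i j * y j))))
    by (intros; rewrite Rmult_assoc, <- sumL_scalr; f_equal; apply sumL_ext; intros;
        rewrite Rmult_assoc, <- sumL_scalr; reflexivity).
  rewrite sumL_scal, sumL_swap. f_equal. apply sumL_ext; intros s Hs.
  rewrite sumL_scal, sumL_swap. f_equal. apply sumL_ext; intros t Ht.
  apply in_seq in Hs. apply nbrs_spec in Ht as [Ht _]. apply W_st_apply; lia.
Qed.

Lemma Wbar_apply_one i : (i < N)%nat -> Wbar_apply (fun _ => 1) i = 1.
Proof.
  intros Hi. rewrite Wbar_apply_avg by assumption.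
  rewrite (sumL_ext _ _ (fun _ => 1)).
  - rewrite sumL_const, length_seq. field. apply not_0_INR. lia.
  - intros s Hs. apply in_seq in Hs.
    pose proof (nbrs_nonempty adj N s HN Hconn ltac:(lia)).
    rewrite (sumL_ext _ _ (fun _ => 1)) by (intros; ring).
    rewrite sumL_const. field. lra.
Qed.

Lemma quad_eq y : quad y = sqnorm y - R_RG N adj y.
Proof.
  assert (HN0 : 0 < INR N) by (apply lt_0_INR; lia).
  unfold quad, R_RG.
  rewrite (sumL_ext _ _ (fun i => / INR N * sumL (seq 0 N) (fun s => / INR (length (nbrs adj N s)) *
      sumL (nbrs adj N s) (fun t => y i ^ 2 - / 2 * (y s - y t) * (kron i s * y i - kron i t * y i)))))
    by (intros i Hi; apply in_seq in Hi; rewrite Wbar_apply_avg by lia;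
        rewrite <- Rmult_assoc, (Rmult_comm (y i)), Rmult_assoc, <- sumL_scal; f_equal;
        apply sumL_ext; intros; rewrite <- Rmult_assoc, (Rmult_comm (y i)), Rmult_assoc, <- sumL_scal;
        f_equal; apply sumL_ext; intros; ring).
  rewrite sumL_scal, sumL_swap.
  rewrite (sumL_ext _ _ (fun s => sqnorm y - / 2 * (/ INR (length (nbrs adj N s))
             * sumL (nbrs adj N s) (fun t => (y s - y t) ^ 2)))).
  - rewrite sumL_minus, sumL_const, length_seq, sumL_scal. field. lra.
  - intros s Hs. apply in_seq in Hs.
    pose proof (nbrs_nonempty adj N s HN Hconn ltac:(lia)).
    rewrite sumL_scal, sumL_swap.
    rewrite (sumL_ext _ _ (fun t => sqnorm y - / 2 * (y s - y t) ^ 2)).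
    + rewrite sumL_minus, sumL_const, sumL_scal. field. lra.
    + intros t Ht. apply nbrs_spec in Ht as [Ht _].
      rewrite sumL_minus, sumL_scal, sumL_minus, !sumL_kron by lia. unfold sqnorm. ring.
Qed.

(* 0 <= R_RG(y) <= ||y||^2, so the eigenvalues of Wbar lie in [0, 1]. *)
Lemma R_RG_nonneg y : 0 <= R_RG N adj y.
Proof.
  unfold R_RG. apply Rmult_le_pos; [apply Rinv_nonneg, Rmult_le_pos; [lra | apply pos_INR]|].
  apply sumL_nonneg; intros s _. apply Rmult_le_pos; [apply Rinv_nonneg, pos_INR|].
  apply sumL_nonneg; intros; apply pow2_ge_0.
Qed.

(* Two distinct coordinates contribute at most ||y||^2, so each gap
   (y_s - y_t)^2 is at most 2 ||y||^2. *)
Lemma sqnorm_ge_pair y s t : (s < N)%nat -> (t < N)%nat -> s <> t ->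
  y s ^ 2 + y t ^ 2 <= sqnorm y.
Proof.
  intros Hs Ht Hst. rewrite <- (sumL_kron N s (fun i => y i ^ 2)), <- (sumL_kron N t (fun i => y i ^ 2))
    by assumption.
  rewrite <- sumL_plus. apply sumL_le; intros i _. pose proof (pow2_ge_0 (y i)).
  unfold kron. destruct (Nat.eqb_spec i s), (Nat.eqb_spec i t); subst; try lia; lra.
Qed.

Lemma R_RG_le_sqnorm y : R_RG N adj y <= sqnorm y.
Proof.
  assert (HN0 : 0 < INR N) by (apply lt_0_INR; lia).
  unfold R_RG.
  apply Rle_trans with (/ (2 * INR N) * sumL (seq 0 N) (fun _ => 2 * sqnorm y)).
  - apply Rmult_le_compat_l; [apply Rinv_nonneg; lra|].
    apply sumL_le; intros s Hs. apply in_seq in Hs.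
    pose proof (nbrs_nonempty adj N s HN Hconn ltac:(lia)).
    apply (Rmult_le_reg_l (INR (length (nbrs adj N s)))); [assumption|].
    rewrite <- Rmult_assoc, Rinv_r, Rmult_1_l, <- sumL_const by lra.
    apply sumL_le; intros t Ht. pose proof (nbrs_irrefl adj N s t Hsimple Ht).
    apply nbrs_spec in Ht as [Ht _].
    pose proof (sqnorm_ge_pair y s t ltac:(lia) Ht ltac:(auto)). pose proof (pow2_ge_0 (y s + y t)).
    nra.
  - rewrite sumL_const, length_seq. right. field. lra.
Qed.
End GossipMatrix.

Section Spectrum.
Variables (N : nat) (adj : nat -> nat -> bool) (v : nat -> nat -> R) (mu : nat -> R).
Hypotheses (HN : (2 <= N)%nat) (Hsimple : simple_graph adj) (Hconn : connected_graph adj N).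
Hypothesis Hortho : forall k k', (k < N)%nat -> (k' < N)%nat ->
  sumL (seq 0 N) (fun i => v k i * v k' i) = kron k k'.
Hypothesis Heig : forall k i, (k < N)%nat -> (i < N)%nat ->
  sumL (seq 0 N) (fun j => Wbar N adj i j * v k j) = mu k * v k i.
Hypothesis Hsorted : forall k, (S k < N)%nat -> mu (S k) <= mu k.

Let Hcompl := OrthonormalCompleteness.columns_orthonormal N v Hortho.

Definition coord (y : nat -> R) (k : nat) : R := sumL (seq 0 N) (fun j => v k j * y j).

Lemma parseval y z :
  sumL (seq 0 N) (fun i => y i * z i) = sumL (seq 0 N) (fun k => coord y k * coord z k).
Proof.
  transitivity (sumL (seq 0 N) (fun k => sumL (seq 0 N) (fun i =>
                  sumL (seq 0 N) (fun j => (v k i * y i) * (v k j * z j))))).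
  2:{ apply sumL_ext; intros k _. unfold coord. rewrite sum_prod. reflexivity. }
  rewrite sumL_swap. apply sumL_ext; intros i Hi. apply in_seq in Hi. rewrite sumL_swap.
  rewrite <- (sumL_kron N i (fun j => y i * z j)) by lia.
  apply sumL_ext; intros j Hj. apply in_seq in Hj.
  rewrite (sumL_ext _ _ (fun k => (y i * z j) * (v k i * v k j))) by (intros; ring).
  rewrite sumL_scal, Hcompl, kron_sym by lia. ring.
Qed.

Lemma coord_Wbar y k : (k < N)%nat -> coord (Wbar_apply N adj y) k = mu k * coord y k.
Proof.
  intros Hk. unfold coord, Wbar_apply.
  rewrite (sumL_ext _ _ (fun i => sumL (seq 0 N) (fun j => v k i * (Wbar N adj i j * y j))))
    by (intros; rewrite <- sumL_scal; reflexivity).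
  rewrite sumL_swap, <- sumL_scal. apply sumL_ext; intros j Hj. apply in_seq in Hj.
  rewrite (sumL_ext _ _ (fun i => y j * (Wbar N adj j i * v k i)))
    by (intros; rewrite (Wbar_sym N adj j); ring).
  rewrite sumL_scal, Heig by lia. ring.
Qed.

Lemma quad_coord y : quad N adj y = sumL (seq 0 N) (fun k => mu k * coord y k ^ 2).
Proof.
  unfold quad. rewrite parseval. apply sumL_ext; intros k Hk. apply in_seq in Hk.
  rewrite coord_Wbar by lia. ring.
Qed.

Lemma sqnorm_coord y : sqnorm N y = sumL (seq 0 N) (fun k => coord y k ^ 2).
Proof.
  unfold sqnorm. rewrite (sumL_ext _ _ (fun i => y i * y i)) by (intros; ring).
  rewrite parseval. apply sumL_ext; intros; ring.
Qed.

Lemma sqnorm_eigvec k : (k < N)%nat -> sqnorm N (v k) = 1.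
Proof.
  intros Hk. unfold sqnorm. rewrite (sumL_ext _ _ (fun i => v k i * v k i)) by (intros; ring).
  rewrite Hortho by assumption. unfold kron. rewrite Nat.eqb_refl. reflexivity.
Qed.

Lemma eigval_R_RG k : (k < N)%nat -> mu k = 1 - R_RG N adj (v k).
Proof.
  intros Hk. rewrite <- (sqnorm_eigvec k Hk), <- quad_eq by assumption.
  unfold quad, Wbar_apply.
  rewrite (sumL_ext _ _ (fun i => mu k * (v k i * v k i))).
  - rewrite sumL_scal, Hortho by assumption. unfold kron. rewrite Nat.eqb_refl. ring.
  - intros i Hi. apply in_seq in Hi. rewrite Heig by lia. ring.
Qed.

Lemma eigval_bounds k : (k < N)%nat -> 0 <= mu k <= 1.
Proof.
  intros Hk. rewrite eigval_R_RG by assumption.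
  pose proof (R_RG_nonneg N adj (v k)). pose proof (R_RG_le_sqnorm N adj HN Hsimple Hconn (v k)).
  rewrite sqnorm_eigvec in * by assumption. lra.
Qed.

Lemma eigval_le_lambda2 k : (1 <= k)%nat -> (k < N)%nat -> mu k <= mu 1%nat.
Proof.
  induction k as [|k IH]; intros H1 H2; [lia|].
  destruct (Nat.eq_dec k 0) as [->|Hk]; [lra|].
  pose proof (Hsorted k H2). pose proof (IH ltac:(lia) ltac:(lia)). lra.
Qed.

(* If lambda_2 < 1, the constant vector is orthogonal to v_1, ..., v_(N-1):
   Wbar fixes it while they are eigenvectors with eigenvalue < 1. *)
Lemma coord_const_perp k : mu 1%nat < 1 -> (1 <= k)%nat -> (k < N)%nat ->
  coord (fun _ => 1) k = 0.
Proof.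
  intros Hlt H1 H2.
  assert (E : coord (Wbar_apply N adj (fun _ => 1)) k = coord (fun _ => 1) k).
  { unfold coord. apply sumL_ext; intros j Hj. apply in_seq in Hj.
    rewrite Wbar_apply_one by (assumption || lia). reflexivity. }
  rewrite coord_Wbar in E by assumption. pose proof (eigval_le_lambda2 k H1 H2).
  assert (Hprod : (mu k - 1) * coord (fun _ => 1) k = 0) by lra.
  apply Rmult_integral in Hprod as [Hprod|Hprod]; [lra | assumption].
Qed.

Lemma coord0_zero_sum y : mu 1%nat < 1 -> sumL (seq 0 N) y = 0 -> coord y 0%nat = 0.
Proof.
  intros Hlt Hy. set (one := fun _ : nat => 1).
  assert (Hsplit : forall z, sumL (seq 0 N) (fun i => z i * one i) = coord z 0%nat * coord one 0%nat).
  { intros z. rewrite parseval.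
    replace (seq 0 N) with (0%nat :: seq 1 (N - 1))
      by (destruct N; [lia | simpl; rewrite Nat.sub_0_r; reflexivity]).
    simpl. rewrite (sumL_ext _ _ (fun _ => 0))
      by (intros k Hk; apply in_seq in Hk; rewrite coord_const_perp by (assumption || lia); ring).
    rewrite sumL_const. ring. }
  assert (Hone : coord one 0%nat * coord one 0%nat = INR N).
  { rewrite <- Hsplit. unfold one. rewrite (sumL_ext _ _ (fun _ => 1)) by (intros; ring).
    rewrite sumL_const, length_seq. ring. }
  assert (Hy0 : coord y 0%nat * coord one 0%nat = 0).
  { rewrite <- Hsplit, <- Hy. apply sumL_ext; intros; unfold one; ring. }
  assert (0 < INR N) by (apply lt_0_INR; lia).
  apply Rmult_integral in Hy0 as [Hy0|Hy0]; [assumption | rewrite Hy0 in Hone; lra].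
Qed.

Lemma quad_le_lambda2 y : sumL (seq 0 N) y = 0 -> quad N adj y <= mu 1%nat * sqnorm N y.
Proof.
  intros Hy.
  destruct (Rle_dec 1 (mu 1%nat)) as [Hge|Hlt].
  { rewrite quad_eq by assumption.
    pose proof (R_RG_nonneg N adj y).
    assert (0 <= sqnorm N y) by (apply sumL_nonneg; intros; apply pow2_ge_0). nra. }
  apply Rnot_le_lt in Hlt.
  rewrite quad_coord, sqnorm_coord, <- sumL_scal.
  apply sumL_le; intros k Hk. apply in_seq in Hk. pose proof (pow2_ge_0 (coord y k)).
  destruct k as [|k].
  - rewrite coord0_zero_sum by assumption. simpl. lra.
  - pose proof (eigval_le_lambda2 (S k) ltac:(lia) ltac:(lia)). nra.
Qed.

Lemma R_RG_zero_const w : R_RG N adj w = 0 -> forall i, (i < N)%nat -> w i = w 0%nat.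
Proof.
  intros H0. apply (connected_const adj N w Hconn). intros s t Hs Ht.
  assert (HN0 : 0 < INR N) by (apply lt_0_INR; lia).
  pose proof (nbrs_nonempty adj N s HN Hconn Hs) as Hn.
  unfold R_RG in H0. apply Rmult_integral in H0 as [H0|H0].
  { pose proof (Rinv_0_lt_compat (2 * INR N) ltac:(lra)). lra. }
  assert (Hterm : forall s', 0 <= / INR (length (nbrs adj N s')) *
                     sumL (nbrs adj N s') (fun t' => (w s' - w t') ^ 2)).
  { intros. apply Rmult_le_pos; [apply Rinv_nonneg, pos_INR|].
    apply sumL_nonneg; intros; apply pow2_ge_0. }
  pose proof (sumL_ge_term (seq 0 N) _ s (fun s' _ => Hterm s') ltac:(apply in_seq; lia)) as Hs'.
  rewrite H0 in Hs'. pose proof (Hterm s).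
  assert (Hsum : sumL (nbrs adj N s) (fun t' => (w s - w t') ^ 2) = 0).
  { pose proof (Rinv_0_lt_compat _ Hn).
    pose proof (sumL_nonneg (nbrs adj N s) (fun t' => (w s - w t') ^ 2) (fun _ _ => pow2_ge_0 _)).
    nra. }
  pose proof (sumL_ge_term _ (fun t' => (w s - w t') ^ 2) t (fun _ _ => pow2_ge_0 _) Ht).
  simpl in *. nra.
Qed.

(* lambda_2 < 1 on a connected graph: otherwise v_0 and v_1 would both be
   constant, contradicting their orthonormality. *)
Lemma lambda2_lt_1 : mu 1%nat < 1.
Proof.
  destruct (Rlt_le_dec (mu 1%nat) 1) as [H|H]; [assumption | exfalso].
  assert (H1 : mu 1%nat = 1) by (pose proof (eigval_bounds 1 ltac:(lia)); lra).
  assert (H0 : mu 0%nat = 1)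
    by (pose proof (eigval_bounds 0 ltac:(lia)); pose proof (Hsorted 0 ltac:(lia)); lra).
  assert (Hconst : forall k, (k < N)%nat -> mu k = 1 -> forall i, (i < N)%nat -> v k i = v k 0%nat).
  { intros k Hk Hmu. apply R_RG_zero_const. rewrite eigval_R_RG in Hmu by assumption. lra. }
  assert (Hinner : forall k k', (k < N)%nat -> (k' < N)%nat -> mu k = 1 -> mu k' = 1 ->
            INR N * (v k 0%nat * v k' 0%nat) = kron k k').
  { intros k k' Hk Hk' Hmu Hmu'. rewrite <- Hortho by assumption.
    rewrite (sumL_ext _ _ (fun _ => v k 0%nat * v k' 0%nat)).
    - rewrite sumL_const, length_seq. reflexivity.
    - intros i Hi. apply in_seq in Hi. rewrite (Hconst k), (Hconst k') by (assumption || lia).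
      reflexivity. }
  pose proof (Hinner 0%nat 1%nat ltac:(lia) ltac:(lia) H0 H1) as E01.
  pose proof (Hinner 0%nat 0%nat ltac:(lia) ltac:(lia) H0 H0) as E00.
  pose proof (Hinner 1%nat 1%nat ltac:(lia) ltac:(lia) H1 H1) as E11.
  unfold kron in *. simpl in *.
  assert ((INR N * (v 0%nat 0%nat * v 1%nat 0%nat)) ^ 2
          = (INR N * (v 0%nat 0%nat * v 0%nat 0%nat)) * (INR N * (v 1%nat 0%nat * v 1%nat 0%nat)))
    by ring.
  rewrite E01, E00, E11 in H2. lra.
Qed.
End Spectrum.

Section Recursion.
Variables (N : nat) (adj : nat -> nat -> bool) (p : R)
  (sel : (nat -> R) -> nat -> list nat -> nat) (a0 : nat -> R) (lam : R).
Hypotheses (HN : (2 <= N)%nat) (Hsimple : simple_graph adj) (Hconn : connected_graph adj N)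
  (Hp : 0 <= p <= 1) (Hsel : valid_selector sel).
Hypothesis Hgap : forall y, sumL (seq 0 N) y = 0 -> quad N adj y <= lam * sqnorm N y.

Lemma sgg_step_outcome x o : In o (sgg_step N adj p sel x) ->
  0 <= fst o /\ exists s t, (s < N)%nat /\ In t (nbrs adj N s) /\ snd o = upd x s t.
Proof.
  intros Ho. unfold sgg_step in Ho.
  apply in_flat_map in Ho as [s [Hs Ho]]. apply in_seq in Hs.
  apply in_flat_map in Ho as [A [HA Ho]].
  assert (HNinv : 0 <= / INR N) by apply Rinv_nonneg, pos_INR.
  destruct A as [|a A'].
  - apply in_map_iff in Ho as [t [<- Ht]]. split.
    + apply Rmult_le_pos; [apply Rmult_le_pos; [assumption | apply pow_le; lra]|].
      apply Rinv_nonneg, pos_INR.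
    + exists s, t. repeat split; [lia | assumption].
  - destruct Ho as [<-|[]]. split.
    + apply Rmult_le_pos; [assumption|]. apply Rmult_le_pos; apply pow_le; lra.
    + exists s, (sel x s (a :: A')). repeat split; [lia|].
      apply (subsets_incl _ _ HA), (Hsel x s (a :: A') ltac:(discriminate)).
Qed.

Lemma sgg_dist_support l wx : In wx (sgg_dist N adj p sel a0 l) ->
  0 <= fst wx /\ sumL (seq 0 N) (snd wx) = sumL (seq 0 N) a0.
Proof.
  revert wx. induction l as [|l IH]; intros wx Hwx.
  - destruct Hwx as [<-|[]]. simpl. lra.
  - simpl in Hwx. apply in_flat_map in Hwx as [wy [Hwy Hwx]].
    apply in_map_iff in Hwx as [o [<- Ho]].
    destruct (IH wy Hwy) as [Hw Hsum].
    destruct (sgg_step_outcome _ _ Ho) as [Ho0 [s [t [Hs [Ht ->]]]]].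
    simpl. split; [apply Rmult_le_pos; assumption|].
    rewrite (sumL_upd N adj Hsimple); assumption.
Qed.

Lemma expect_nonneg l f : (forall x, 0 <= f x) -> 0 <= expect N adj p sel a0 l f.
Proof.
  intros Hf. apply sumL_nonneg; intros wx Hwx.
  apply Rmult_le_pos; [apply (sgg_dist_support l wx Hwx) | apply Hf].
Qed.

Lemma sqdist_nonneg x : 0 <= sqdist N a0 x.
Proof. apply sumL_nonneg; intros; apply pow2_ge_0. Qed.

Lemma Err_nonneg l : 0 <= Err N adj p sel a0 l.
Proof. apply expect_nonneg, sqdist_nonneg. Qed.

Lemma eta_nonneg l : 0 <= eta N adj p sel a0 l.
Proof.
  apply expect_nonneg; intros x. pose proof (R_RG_le_R_SGG N adj p x Hp). lra.
Qed.

Lemma Err_succ l : Err N adj p sel a0 (S l) =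
  expect N adj p sel a0 l (fun x => sqdist N a0 x - R_SGG N adj p x).
Proof.
  unfold Err, expect. simpl sgg_dist. rewrite sumL_flat_map. apply sumL_ext; intros wx _.
  rewrite sumL_map, <- (sgg_step_sqdist N adj p sel a0 HN Hsimple Hconn Hsel), <- sumL_scal.
  apply sumL_ext; intros; simpl; ring.
Qed.

Lemma state_contraction x : sumL (seq 0 N) x = sumL (seq 0 N) a0 ->
  sqdist N a0 x - R_RG N adj x <= lam * sqdist N a0 x.
Proof.
  intros Hx. set (y := fun i => x i - avg N a0).
  assert (Hy : sumL (seq 0 N) y = 0).
  { unfold y. rewrite sumL_minus, sumL_const, length_seq, Hx. unfold avg.
    field. apply not_0_INR. lia. }
  replace (R_RG N adj x) with (R_RG N adj y)
    by (unfold R_RG; f_equal; apply sumL_ext; intros s _; f_equal;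
        apply sumL_ext; intros t _; unfold y; ring).
  change (sqdist N a0 x) with (sqnorm N y).
  rewrite <- quad_eq by assumption. apply Hgap, Hy.
Qed.

Lemma Err_eta_le l : Err N adj p sel a0 (S l) + eta N adj p sel a0 (S l) <= lam * Err N adj p sel a0 l.
Proof.
  rewrite Err_succ. unfold eta. rewrite Nat.sub_succ, Nat.sub_0_r.
  unfold Err, expect. rewrite <- sumL_plus, <- sumL_scal.
  apply sumL_le; intros wx Hwx. destruct (sgg_dist_support l wx Hwx) as [Hw Hsum].
  pose proof (state_contraction (snd wx) Hsum). nra.
Qed.
End Recursion.

Lemma chebyshev_term w D d0 eps : 0 <= w -> 0 <= D -> 0 < d0 -> 0 < eps ->
  (if Rle_dec eps (sqrt D / sqrt d0) then w else 0) <= w * D / (eps ^ 2 * d0).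
Proof.
  intros Hw HD Hd0 He.
  assert (Hk : 0 < eps ^ 2 * d0) by (apply Rmult_lt_0_compat; [apply pow_lt|]; assumption).
  destruct (Rle_dec eps (sqrt D / sqrt d0)) as [Hle|_].
  - assert (Hsd : 0 < sqrt d0) by (apply sqrt_lt_R0, Hd0).
    assert (H2 : eps ^ 2 <= D / d0).
    { replace (D / d0) with ((sqrt D / sqrt d0) ^ 2)
        by (unfold Rdiv; rewrite Rpow_mult_distr, pow_inv, !pow2_sqrt; lra).
      apply pow_incr. lra. }
    assert (eps ^ 2 * d0 <= D).
    { apply (Rmult_le_compat_r d0) in H2; [|lra].
      unfold Rdiv in H2. rewrite Rmult_assoc, Rinv_l, Rmult_1_r in H2 by lra. assumption. }
    apply (Rmult_le_reg_r _ _ _ Hk). unfold Rdiv. rewrite Rmult_assoc, Rinv_l by lra. nra.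
  - apply Rmult_le_pos; [apply Rmult_le_pos|apply Rinv_nonneg]; lra.
Qed.

Lemma prob_ratio_le_Err N adj p sel a0 l eps :
  (2 <= N)%nat -> simple_graph adj -> 0 <= p <= 1 -> valid_selector sel ->
  0 < eps -> 0 < sqdist N a0 a0 ->
  prob_ratio_ge N adj p sel a0 l eps <= Err N adj p sel a0 l / (eps ^ 2 * sqdist N a0 a0).
Proof.
  intros HN Hsimple Hp Hsel He Hd0.
  unfold prob_ratio_ge, Err, expect, Rdiv. rewrite <- sumL_scalr.
  apply sumL_le; intros wx Hwx.
  apply chebyshev_term; try assumption.
  - eapply proj1, sgg_dist_support; eassumption.
  - apply sqdist_nonneg.
Qed.

Lemma prodL_app {A} (l1 l2 : list A) (f : A -> R) : prodL (l1 ++ l2) f = prodL l1 f * prodL l2 f.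
Proof. induction l1 as [|a l1 IH]; simpl; [ring | unfold prodL in *; simpl; rewrite IH; ring]. Qed.

Lemma prodL_le_pow {A} (L : list A) (g : A -> R) c : (forall i, In i L -> 0 <= g i <= c) ->
  0 <= prodL L g <= c ^ length L.
Proof.
  induction L as [|a L IH]; intros H; unfold prodL in *; simpl; [lra|].
  destruct (H a (or_introl eq_refl)) as [H1 H2].
  destruct IH as [IH1 IH2]; [intros; apply H; right; assumption|].
  split; [apply Rmult_le_pos | apply Rmult_le_compat]; assumption.
Qed.

Lemma fold_min_le (g : nat -> R) b L i : In i L -> fold_right (fun i acc => Rmin (g i) acc) b L <= g i.
Proof.
  induction L as [|a L IH]; intros H; [destruct H|]. simpl.
  destruct H as [->|H]; [apply Rmin_l | eapply Rle_trans; [apply Rmin_r | apply IH, H]].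
Qed.

Lemma fold_min_ge (g : nat -> R) b L m : m <= b -> (forall i, In i L -> m <= g i) ->
  m <= fold_right (fun i acc => Rmin (g i) acc) b L.
Proof.
  induction L as [|a L IH]; intros Hb H; simpl; [assumption|].
  apply Rmin_glb; [apply H; left; reflexivity|].
  apply IH; [assumption | intros; apply H; right; assumption].
Qed.

Section Rates.
Variables (N : nat) (adj : nat -> nat -> bool) (p : R)
  (sel : (nat -> R) -> nat -> list nat -> nat) (a0 : nat -> R) (lam : R).
Hypotheses (HN : (2 <= N)%nat) (Hsimple : simple_graph adj) (Hconn : connected_graph adj N)
  (Hp : 0 <= p <= 1) (Hsel : valid_selector sel) (Hlam : 0 <= lam).
Hypothesis Hgap : forall y, sumL (seq 0 N) y = 0 -> quad N adj y <= lam * sqnorm N y.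

Notation Er := (Err N adj p sel a0).
Notation bt := (beta N adj p sel a0).

Lemma beta_step l : 0 <= bt (S l) /\ Er (S l) <= (lam - bt (S l)) * Er l /\ 0 <= lam - bt (S l).
Proof.
  assert (Hrec : Er (S l) + eta N adj p sel a0 (S l) <= lam * Er l)
    by (eapply Err_eta_le; eassumption).
  assert (Heta : 0 <= eta N adj p sel a0 (S l)) by (eapply eta_nonneg; eassumption).
  assert (HE1 : 0 <= Er (S l)) by (eapply Err_nonneg; eassumption).
  unfold beta. rewrite Nat.sub_succ, Nat.sub_0_r.
  destruct (Rlt_dec 0 (Er l)) as [Hpos|Hzero].
  - set (e := eta N adj p sel a0 (S l)) in *.
    assert (Hq : e / Er l * Er l = e) by (field; lra).
    assert (0 <= e / Er l) by (apply Rmult_le_pos; [assumption | apply Rinv_nonneg; lra]).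
    assert (e / Er l <= lam) by (apply (Rmult_le_reg_r (Er l)); [assumption | rewrite Hq; lra]).
    repeat split; [assumption | | lra]. rewrite Rmult_minus_distr_r, Hq. lra.
  - assert (0 <= Er l) by (eapply Err_nonneg; eassumption).
    assert (Er l = 0) by lra.
    repeat split; lra || nra.
Qed.

Lemma beta_range i : (1 <= i)%nat -> 0 <= bt i /\ 0 <= lam - bt i.
Proof.
  intros Hi. destruct i as [|i]; [lia|].
  destruct (beta_step i) as [? [_ ?]]. split; assumption.
Qed.

Lemma Err_le_prod l : Er l <= sqdist N a0 a0 * prodL (seq 1 l) (fun i => lam - bt i).
Proof.
  induction l as [|l IH]; [unfold Err, expect, prodL; simpl; lra|].
  rewrite seq_S, prodL_app. replace (1 + l)%nat with (S l) by lia.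
  destruct (beta_step l) as [_ [Hstep Hnn]].
  assert (0 <= Er l) by (eapply Err_nonneg; eassumption).
  unfold prodL at 2. simpl. nra.
Qed.

Lemma min_beta_le i l : In i (seq 1 l) -> min_beta N adj p sel a0 l <= bt i.
Proof. intros Hi. apply fold_min_le, Hi. Qed.

Lemma min_beta_nonneg l : (1 <= l)%nat -> 0 <= min_beta N adj p sel a0 l.
Proof.
  intros Hl. apply fold_min_ge; [apply beta_range, Hl|].
  intros i Hi. apply in_seq in Hi. apply beta_range. lia.
Qed.

Lemma prod_le_pow_min l :
  0 <= prodL (seq 1 l) (fun i => lam - bt i) <= (lam - min_beta N adj p sel a0 l) ^ l.
Proof.
  replace ((lam - min_beta N adj p sel a0 l) ^ l)
    with ((lam - min_beta N adj p sel a0 l) ^ length (seq 1 l)) by (rewrite length_seq; reflexivity).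
  apply prodL_le_pow.
  intros i Hi. pose proof (min_beta_le i l Hi). apply in_seq in Hi.
  pose proof (beta_range i ltac:(lia)). lra.
Qed.

Lemma tail_bound l eps : 0 < eps -> 0 < sqdist N a0 a0 ->
  prob_ratio_ge N adj p sel a0 l eps <= / eps ^ 2 * (lam - min_beta N adj p sel a0 l) ^ l.
Proof.
  intros He Hd0. eapply Rle_trans; [apply prob_ratio_le_Err; assumption|].
  assert (0 < eps ^ 2) by (apply pow_lt, He).
  apply Rle_trans
    with (sqdist N a0 a0 * (lam - min_beta N adj p sel a0 l) ^ l / (eps ^ 2 * sqdist N a0 a0)).
  - unfold Rdiv. apply Rmult_le_compat_r; [apply Rinv_nonneg; nra|].
    eapply Rle_trans; [apply Err_le_prod | apply Rmult_le_compat_l; [lra | apply prod_le_pow_min]].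
  - right. field. lra.
Qed.
End Rates.

(* If rho^l <= eps^3 -- which the hypothesis on l guarantees -- then the
   Chebyshev bound eps^-2 rho^l is at most eps. *)
Lemma averaging_time eps rho (l : nat) : 0 < eps < 1 -> 0 < rho < 1 ->
  INR l >= 3 * ln (/ eps) / ln (/ rho) -> / eps ^ 2 * rho ^ l <= eps.
Proof.
  intros He Hr Hl.
  assert (Hlnr : ln rho < 0) by (rewrite <- ln_1; apply ln_increasing; lra).
  assert (Hlne : ln eps < 0) by (rewrite <- ln_1; apply ln_increasing; lra).
  rewrite !ln_Rinv in Hl by lra.
  assert (Hlog : INR l * ln rho <= 3 * ln eps).
  { apply Rge_le in Hl. apply (Rmult_le_compat_r (- ln rho)) in Hl; [|lra].
    unfold Rdiv in Hl. rewrite Rmult_assoc, Rinv_l, Rmult_1_r in Hl by lra. lra. }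
  assert (Hpow : rho ^ l <= eps ^ 3).
  { destruct (Rle_lt_dec (rho ^ l) (eps ^ 3)) as [Hok|Hgt]; [assumption|].
    apply ln_increasing in Hgt; [|apply pow_lt; lra].
    rewrite !ln_pow in Hgt by lra. simpl INR in Hgt. lra. }
  assert (0 < eps ^ 2) by (apply pow_lt; lra).
  apply Rle_trans with (/ eps ^ 2 * eps ^ 3).
  - apply Rmult_le_compat_l; [apply Rinv_nonneg; lra | assumption].
  - right. field. lra.
Qed.

Lemma sqdist_initial_pos N a0 : (exists i, (i < N)%nat /\ a0 i <> avg N a0) -> 0 < sqdist N a0 a0.
Proof.
  intros [i0 [Hi0 Ha0]]. apply Rlt_le_trans with ((a0 i0 - avg N a0) ^ 2).
  - rewrite <- Rsqr_pow2. apply Rsqr_pos_lt. lra.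
  - apply (sumL_ge_term _ (fun i => (a0 i - avg N a0) ^ 2));
      [intros; apply pow2_ge_0 | apply in_seq; lia].
Qed.

Theorem theorem3 (N : nat) (adj : nat -> nat -> bool) (p : R)
    (sel : (nat -> R) -> nat -> list nat -> nat) (a0 : nat -> R) (lam : R) :
  (2 <= N)%nat ->
  simple_graph adj ->
  connected_graph adj N ->
  0 <= p <= 1 ->
  valid_selector sel ->
  (exists i, (i < N)%nat /\ a0 i <> avg N a0) ->
  is_lambda2 N (Wbar N adj) lam ->
  forall l : nat, (1 <= l)%nat ->
    0 <= beta N adj p sel a0 l /\
    Err N adj p sel a0 l <= (lam - beta N adj p sel a0 l) * Err N adj p sel a0 (l - 1) /\
    Err N adj p sel a0 l
      <= sqdist N a0 a0 * prodL (seq 1 l) (fun i => lam - beta N adj p sel a0 i) /\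
    sqdist N a0 a0 * prodL (seq 1 l) (fun i => lam - beta N adj p sel a0 i)
      <= sqdist N a0 a0 * (lam - min_beta N adj p sel a0 l) ^ l /\
    (forall eps, 0 < eps < 1 ->
       prob_ratio_ge N adj p sel a0 l eps
         <= / eps ^ 2 * (lam - min_beta N adj p sel a0 l) ^ l) /\
    (forall eps, 0 < eps < 1 ->
       0 < lam - min_beta N adj p sel a0 l ->
       INR l >= 3 * ln (/ eps) / ln (/ (lam - min_beta N adj p sel a0 l)) ->
       prob_ratio_ge N adj p sel a0 l eps <= eps).
Proof.
  intros HN Hsimple Hconn Hp Hsel Hnonconst [v [mu [Hortho [Heig [Hsorted ->]]]]] l Hl.
  assert (Hlam0 : 0 <= mu 1%nat) by (apply (eigval_bounds N adj v mu); assumption || lia).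
  assert (Hlam1 : mu 1%nat < 1) by (eapply lambda2_lt_1; eassumption).
  pose proof (quad_le_lambda2 N adj v mu HN Hconn Hortho Heig Hsorted) as Hgap.
  pose proof (sqdist_initial_pos N a0 Hnonconst) as Hd0.
  destruct l as [|l]; [lia|].
  destruct (beta_step N adj p sel a0 _ HN Hsimple Hconn Hp Hsel Hlam0 Hgap l) as [Hbeta [Hstep _]].
  pose proof (Err_le_prod N adj p sel a0 _ HN Hsimple Hconn Hp Hsel Hlam0 Hgap (S l)).
  pose proof (prod_le_pow_min N adj p sel a0 _ HN Hsimple Hconn Hp Hsel Hlam0 Hgap (S l)) as [_ Hpow].
  pose proof (min_beta_nonneg N adj p sel a0 _ HN Hsimple Hconn Hp Hsel Hlam0 Hgap (S l) Hl).
  pose proof (tail_bound N adj p sel a0 _ HN Hsimple Hconn Hp Hsel Hlam0 Hgap (S l)) as Htail.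
  rewrite Nat.sub_succ, Nat.sub_0_r.
  repeat split; try assumption.
  - apply Rmult_le_compat_l; lra.
  - intros eps He. apply Htail; [lra | assumption].
  - intros eps He Hrho Htime. eapply Rle_trans; [apply Htail; [lra | assumption]|].
    apply averaging_time; [assumption | lra | assumption].
Qed.
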